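(* Let $\Bbbk$ be a field of characteristic zero, $S=\Bbbk[x_1,x_2,x_3,x_4]$, $d\geq 5$, and $I=(x_1^d,x_2^d,x_3^d,x_4^d,x_1^3x_2^{d-3})$. Then $S/I$ fails the WLP by surjectivity in degree $2d-3$.
   Context: $\mathrm{HF}(A,k)=\dim_\Bbbk A_k$. For a monomial ideal $I$, $A=S/I$ fails the WLP by surjectivity in degree $i$ if $\mathrm{HF}(A,i)\ge\mathrm{HF}(A,i+1)$ and $\times(x_1+\cdots+x_4): A_i\to A_{i+1}$ is not surjective. *)

From mathcomp Require Import all_boot all_algebra.
From mathcomp Require Import mpoly.
Set Implicit Arguments. Unset Strict Implicit. Unset Printing Implicit Defensive.
Import GRing.Theory.
Local Open Scope ring_scope.

Section Graded.
Context {k : fieldType} {n : nat}.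

Definition in_ideal (gens : seq {mpoly k[n]}) (p : {mpoly k[n]}) : Prop :=
  exists cs : 'I_(size gens) -> {mpoly k[n]},
    p = \sum_(j < size gens) cs j * gens`_j.

(* f_1,...,f_m are homogeneous of degree i and their classes are linearly
   independent in A_i, where A = S/I and I = (gens). *)
Definition indep_in_deg (gens : seq {mpoly k[n]}) (i m : nat)
    (f : 'I_m -> {mpoly k[n]}) : Prop :=
  (forall j, f j \is i.-homog) /\
  (forall c : 'I_m -> k, in_ideal gens (\sum_(j < m) c j *: f j) ->
     forall j, c j = 0).

Definition HF_atleast (gens : seq {mpoly k[n]}) (i m : nat) : Prop :=
  exists f : 'I_m -> {mpoly k[n]}, indep_in_deg gens i f.

Definition HF_ge (gens : seq {mpoly k[n]}) (i j : nat) : Prop :=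
  forall m, HF_atleast gens j m -> HF_atleast gens i m.

Definition mult_surj (gens : seq {mpoly k[n]}) (l : {mpoly k[n]}) (i : nat)
    : Prop :=
  forall f, f \is i.+1.-homog ->
    exists g, g \is i.-homog /\ in_ideal gens (f - l * g).

Definition fails_WLP_surj (gens : seq {mpoly k[n]}) (i : nat) : Prop :=
  HF_ge gens i i.+1 /\
  ~ mult_surj gens (\sum_(j < n) 'X_j) i.

End Graded.

(* the variables x_1..x_4 of k[x_1,x_2,x_3,x_4] (x 0 = x_1, ..., x 3 = x_4) *)
Definition x4 {k : fieldType} (i : nat) : {mpoly k[4]} := 'X_(inord i).

Definition I_lemma5p4 (k : fieldType) (d : nat) : seq {mpoly k[4]} :=
  [:: x4 0 ^+ d; x4 1 ^+ d; x4 2 ^+ d; x4 3 ^+ d;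
      x4 0 ^+ 3 * x4 1 ^+ (d - 3)].

(* Standard monomials (those divisible by no generator) of degree j give a
   basis of A_j.  Multiplication by l = x_1 + x_2 + x_3 + x_4 does not map A_(2d-3)
   onto A_(2d-2): the functional sending x_1^a x_2^b x_3^c x_4^e with
   a + b = c + e = d - 1 to (-1)^(a+c), and every other monomial to 0, vanishes
   on I because all these monomials are standard, and on l S_(2d-3) because the
   contributions of x_1 and x_2, and of x_3 and x_4, cancel in pairs; yet it
   takes the value 1 on x_2^(d-1) x_4^(d-1).  For HF(A,2d-3) >= HF(A,2d-2), an
   injection from the standard monomials of degree 2d-2 into those of degree
   2d-3 induces a linear map A_(2d-2) -> A_(2d-3) that preserves linear
   independence. *)

From mathcomp Require Import all_boot all_algebra.
From mathcomp Require Import mpoly.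
From mathcomp Require Import zify ring.
From HB Require Import structures.
Set Implicit Arguments. Unset Strict Implicit. Unset Printing Implicit Defensive.
Import GRing.Theory.
Local Open Scope ring_scope.

Section MonomialIdeal.
Variables (k : fieldType) (n : nat) (G : seq 'X_{1..n}).
Implicit Types (p : {mpoly k[n]}) (m u : 'X_{1..n}).

Local Notation I := [seq 'X_[g] : {mpoly k[n]} | g <- G].

Definition standard m := all (fun g => ~~ (g <= m)%MM) G.

Definition std_deg (j : nat) : pred 'X_{1..n} :=
  [pred m | standard m && (mdeg m == j)].

Lemma mcoeffMX_nodiv p g m : ~~ (g <= m)%MM -> (p * 'X_[g])@_m = 0.
Proof.
move=> ngm; rewrite [p]mpolyE big_distrl /= raddf_sum /=.
apply: big1 => u _; rewrite -scalerAl -mpolyXD mcoeffZ mcoeffX.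
case: eqP => [e|_]; last by rewrite mulr0.
by rewrite -e lem_addl in ngm.
Qed.

Lemma monomial_idealP p : in_ideal I p <-> forall m, standard m -> p@_m = 0.
Proof.
split.
  case=> cs -> m /allP stdm; rewrite raddf_sum /=; apply: big1 => j _.
  have ltjG : (j < size G)%N by rewrite -(size_map (fun g => 'X_[g] : {mpoly k[n]})).
  by rewrite (nth_map 0%MM) // mcoeffMX_nodiv // stdm // mem_nth.
move=> hp.
have divG m : m \in msupp p -> has (fun g => (g <= m)%MM) G.
  move=> msupp_m; apply: contraTT msupp_m => /hasPn stdm.
  by rewrite mcoeff_msupp negbK hp //; apply/allP.
pose sel m := find (fun g => (g <= m)%MM) G.
exists (fun j : 'I_(size I) => \sum_(m <- msupp p | sel m == val j)
          p@_m *: 'X_[m - nth 0%MM G j]).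
rewrite size_map.
transitivity (\sum_(j < size G) \sum_(m <- msupp p | sel m == val j) p@_m *: 'X_[m]).
  rewrite (exchange_big_dep xpredT) //=.
  under eq_big_seq => m msupp_m.
    have ltsel : (sel m < size G)%N by rewrite -has_find divG.
    by rewrite (big_pred1 (Ordinal ltsel)) //; over.
  exact: mpolyE.
apply: eq_bigr => j _; rewrite big_distrl /= big_seq_cond [RHS]big_seq_cond.
apply: eq_bigr => m /andP [msupp_m /eqP selj].
rewrite (nth_map 0%MM) // -scalerAl -mpolyXD submK //.
by have := nth_find 0%MM (divG m msupp_m); rewrite -/(sel m) selj.
Qed.

Section DualFunctional.
Variables (W : 'X_{1..n} -> k) (e : nat).
Hypothesis W_homog : forall m, W m != 0 -> mdeg m = e.

Definition pairW p : k := \sum_(m : 'X_{1..n < e.+1}) W m * p@_m.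

Lemma pairW_is_scalar : scalar pairW.
Proof.
move=> a p q; rewrite /pairW mulr_sumr -big_split /=.
by apply: eq_bigr => m _; rewrite mcoeffD mcoeffZ mulrDr mulrCA.
Qed.

HB.instance Definition _ :=
  GRing.isLinear.Build k {mpoly k[n]} k *%R pairW pairW_is_scalar.

Lemma pairWX m : pairW 'X_[m] = W m.
Proof.
have [W0|/W_homog degm] := eqVneq (W m) 0.
  rewrite W0; apply: big1 => u _.
  by rewrite mcoeffX; case: eqP => [<-|_]; rewrite ?W0 ?mulr0 ?mul0r.
have ltm : (mdeg m < e.+1)%N by rewrite degm.
rewrite /pairW (bigD1 (BMultinom ltm)) //= mcoeffX eqxx mulr1 big1 ?addr0 // => u neum.
rewrite mcoeffX; case: eqP => [eum|_]; last by rewrite mulr0.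
by move: neum; rewrite (_ : u = BMultinom ltm) ?eqxx //; apply: val_inj.
Qed.

Lemma pairW_ideal p :
  (forall m, W m != 0 -> standard m) -> in_ideal I p -> pairW p = 0.
Proof.
move=> W_std /monomial_idealP p_std; apply: big1 => m _.
by have [->|/W_std/p_std->] := eqVneq (W m) 0; rewrite ?mul0r ?mulr0.
Qed.

Lemma pairW_mul_sumX g :
  (forall u, \sum_(j < n) W (u + U_(j))%MM = 0) ->
  pairW ((\sum_(j < n) 'X_j) * g) = 0.
Proof.
move=> W_harm; rewrite [g]mpolyE mulr_sumr linear_sum; apply: big1 => u _ /=.
rewrite -scalerAr mulr_suml linearZ linear_sum /=.
under eq_bigr => j _ do rewrite -mpolyXD pairWX addmC.
by rewrite W_harm mulr0.
Qed.

End DualFunctional.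

Lemma not_mult_sumX_surj (W : 'X_{1..n} -> k) i m0 :
  (forall m, W m != 0 -> mdeg m = i.+1 /\ standard m) ->
  (forall u, \sum_(j < n) W (u + U_(j))%MM = 0) ->
  W m0 != 0 ->
  ~ mult_surj I (\sum_(j < n) 'X_j) i.
Proof.
move=> W_supp W_harm Wm0 surj.
have W_homog m : W m != 0 -> mdeg m = i.+1 by case/W_supp.
have homX : ('X_[m0] : {mpoly k[n]}) \is i.+1.-homog.
  by apply/dhomogP => m; rewrite msuppX inE => /eqP ->; case/W_supp: Wm0.
have [g [_ Ig]] := surj _ homX.
move: Wm0; rewrite -(pairWX W_homog) -(subrK ((\sum_(j < n) 'X_j) * g) 'X_[m0]).
rewrite linearD /= pairW_mul_sumX // addr0 (pairW_ideal _ _ Ig) ?eqxx //.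
by move=> m /W_supp[].
Qed.

Section Transport.
Variables (i j : nat) (psi : 'X_{1..n} -> 'X_{1..n}).
Hypothesis psi_std : {in std_deg j, forall m, psi m \in std_deg i}.
Hypothesis psi_inj : {in std_deg j &, injective psi}.

Definition transport p : {mpoly k[n]} :=
  \sum_(m : 'X_{1..n < j.+1} | val m \in std_deg j) p@_m *: 'X_[psi m].

Lemma transport_is_linear : linear transport.
Proof.
move=> a p q; rewrite /transport scaler_sumr -big_split /=.
by apply: eq_bigr => m _; rewrite mcoeffD mcoeffZ scalerDl scalerA.
Qed.

HB.instance Definition _ :=
  GRing.isLinear.Build k {mpoly k[n]} {mpoly k[n]} _ transport transport_is_linear.

Lemma transport_homog p : transport p \is i.-homog.
Proof.
apply: rpred_sum => m std_m; apply: rpredZ.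
apply/dhomogP => u; rewrite msuppX inE => /eqP ->.
by have /andP[_ /eqP] := psi_std std_m.
Qed.

Lemma mcoeff_transport p m : m \in std_deg j -> (transport p)@_(psi m) = p@_m.
Proof.
move=> std_m; have ltm : (mdeg m < j.+1)%N by case/andP: std_m => _ /eqP ->.
rewrite /transport raddf_sum (bigD1 (BMultinom ltm)) //= mcoeffZ mcoeffX eqxx mulr1.
rewrite big1 ?addr0 // => u /andP[std_u neum]; rewrite mcoeffZ mcoeffX.
case: eqP => [/psi_inj eum|_]; last by rewrite mulr0.
by move: neum; rewrite (_ : u = BMultinom ltm) ?eqxx //; apply: val_inj; rewrite /= eum.
Qed.

Lemma HF_ge_of_injective : HF_ge I i j.
Proof.
move=> r [f [homf indf]]; exists (transport \o f); split=> [t|c].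
  exact: transport_homog.
under eq_bigr => t _ do rewrite /= -linearZ.
rewrite -linear_sum; set P := \sum_(t < r) _ => I_P.
apply: indf; apply/monomial_idealP => m std_m.
have homP : P \is j.-homog by apply: rpred_sum => t _; apply: rpredZ.
have [degm|ndegm] := eqVneq (mdeg m) j; last first.
  by apply: memN_msupp_eq0; apply: contra ndegm => /(dhomog_mf homP) ->.
have std_deg_m : m \in std_deg j by rewrite unfold_in /std_deg std_m degm eqxx.
rewrite -mcoeff_transport //; move/monomial_idealP: I_P; apply.
by have /andP[] := psi_std std_deg_m.
Qed.

End Transport.

End MonomialIdeal.

Definition expo (m : 'X_{1..4}) (i : nat) : nat := m (inord i).

Definition mnm4 (a b c e : nat) : 'X_{1..4} :=
  [multinom nth 0%N [:: a; b; c; e] i | i < 4].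

Lemma ord4P (i : 'I_4) : [\/ i = inord 0, i = inord 1, i = inord 2 | i = inord 3].
Proof.
case: i => [[|[|[|[|i]]]] lti] //;
  [constructor 1 | constructor 2 | constructor 3 | constructor 4];
  by apply: val_inj; rewrite /= inordK.
Qed.

Lemma mnm4P m1 m2 :
  expo m1 0 = expo m2 0 -> expo m1 1 = expo m2 1 ->
  expo m1 2 = expo m2 2 -> expo m1 3 = expo m2 3 -> m1 = m2.
Proof. by move=> e0 e1 e2 e3; apply/mnmP => i; case: (ord4P i) => ->. Qed.

Lemma expo_mnm4 a b c e i :
  (i < 4)%N -> expo (mnm4 a b c e) i = nth 0%N [:: a; b; c; e] i.
Proof. by move=> lti; rewrite /expo /mnm4 mnmE inordK. Qed.

Lemma expoD m1 m2 i : expo (m1 + m2)%MM i = (expo m1 i + expo m2 i)%N.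
Proof. by rewrite /expo mnmDE. Qed.

Lemma expoU (j : 'I_4) i : (i < 4)%N -> expo U_(j)%MM i = (val j == i).
Proof. by move=> lti; rewrite /expo mnm1E -(inj_eq val_inj) /= inordK. Qed.

Lemma mdeg4 m : mdeg m = (expo m 0 + expo m 1 + expo m 2 + expo m 3)%N.
Proof.
rewrite mdegE !big_ord_recl big_ord0 addn0 /expo !addnA.
by congr (_ + _ + _ + _); congr (m _); apply: val_inj; rewrite /= inordK.
Qed.

Lemma lem4E m1 m2 : (m1 <= m2)%MM =
  [&& expo m1 0 <= expo m2 0, expo m1 1 <= expo m2 1,
      expo m1 2 <= expo m2 2 & expo m1 3 <= expo m2 3]%N.
Proof.
apply/mnm_lepP/and4P => [le12|[le0 le1 le2 le3] i]; first by split; apply: le12.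
by case: (ord4P i) => ->.
Qed.

Definition gens4 (d : nat) : seq 'X_{1..4} :=
  [:: mnm4 d 0 0 0; mnm4 0 d 0 0; mnm4 0 0 d 0; mnm4 0 0 0 d; mnm4 3 (d - 3) 0 0].

Lemma mnm4D a b c e a' b' c' e' :
  (mnm4 a b c e + mnm4 a' b' c' e')%MM = mnm4 (a + a') (b + b') (c + c') (e + e').
Proof. by apply: mnm4P; rewrite expoD !expo_mnm4. Qed.

Lemma mnm4Un i r : (i < 4)%N ->
  (U_(inord i) *+ r)%MM = mnm4 (r * (i == 0)) (r * (i == 1)) (r * (i == 2)) (r * (i == 3)).
Proof.
move=> lti; apply: mnm4P;
by rewrite !expo_mnm4 // /expo mulmnE mnm1E -(inj_eq val_inj) /= !inordK // mulnC.
Qed.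

Lemma I_lemma5p4E (k : fieldType) d : I_lemma5p4 k d = [seq 'X_[g] | g <- gens4 d].
Proof.
by rewrite /I_lemma5p4 /x4 !mpolyXn -mpolyXD !mnm4Un // mnm4D /= !muln0 !muln1 !addn0.
Qed.

Definition std4 (d a b c e : nat) : bool :=
  [&& a < d, b < d, c < d, e < d & ~~ ((3 <= a) && (d - 3 <= b))]%N.

Lemma standard_gens4 d m :
  standard (gens4 d) m = std4 d (expo m 0) (expo m 1) (expo m 2) (expo m 3).
Proof.
by rewrite /standard /std4 /= !lem4E !expo_mnm4 //= !leq0n /= !andbT -!ltnNge.
Qed.

Lemma std_deg_gens4 d j m : (m \in std_deg (gens4 d) j) =
  std4 d (expo m 0) (expo m 1) (expo m 2) (expo m 3) &&
  (expo m 0 + expo m 1 + expo m 2 + expo m 3 == j)%N.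
Proof. by rewrite unfold_in /std_deg standard_gens4 mdeg4. Qed.

Section AlternatingFunctional.
Variables (k : fieldType) (d : nat).

Definition alt_antidiag (a b : nat) : k := if (a + b).+1 == d then (-1) ^+ a else 0.

Lemma alt_antidiagSl a b : alt_antidiag a.+1 b = - alt_antidiag a b.+1.
Proof. by rewrite /alt_antidiag addSn addnS exprS mulN1r; case: ifP; rewrite ?oppr0. Qed.

Lemma alt_antidiag_neq0 a b : alt_antidiag a b != 0 -> (a + b).+1 = d.
Proof. by rewrite /alt_antidiag; case: ifP => [/eqP|_] //; rewrite eqxx. Qed.

Definition W4 (m : 'X_{1..4}) : k :=
  alt_antidiag (expo m 0) (expo m 1) * alt_antidiag (expo m 2) (expo m 3).

Lemma W4_supp m : (3 <= d)%N -> W4 m != 0 ->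
  mdeg m = (2 * d - 3).+1 /\ standard (gens4 d) m.
Proof.
rewrite /W4 mulf_eq0 negb_or => led /andP[/alt_antidiag_neq0 e01 /alt_antidiag_neq0 e23].
by rewrite mdeg4 standard_gens4 /std4; split; [|apply/and5P; split]; lia.
Qed.

Lemma W4_harm u : \sum_(j < 4) W4 (u + U_(j))%MM = 0.
Proof.
rewrite !big_ord_recl big_ord0 addr0 /W4.
rewrite !expoD !expoU //= !addn0 !addn1 !alt_antidiagSl.
by ring.
Qed.

Lemma W4_top : (0 < d)%N -> W4 (mnm4 0 d.-1 0 d.-1) = 1.
Proof.
by move=> d_gt0; rewrite /W4 !expo_mnm4 //= /alt_antidiag add0n prednK // eqxx mulr1.
Qed.

End AlternatingFunctional.

Section LowerExponents.
Local Open Scope nat_scope.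
Variable d : nat.
Hypothesis d_ge5 : 5 <= d.

(* Outside the monomials x_1^(d-1) x_3^c x_4^(d-1-c), which are placed by hand,
   exactly one exponent is lowered by one. *)
Definition lower_exps (a b c e : nat) : nat * nat * nat * nat :=
  if b + c < d then
    if a < c then (if d <= a + e then (a - 1, b, c, e) else (a, b, c, e - 1))
    else if d <= c + e then (a - 1, b, c, e)
    else if 0 < b then (a, b - 1, c, e)
    else if c <= d - 4 then (c + 3, d - 4, 0, d - 2 - c)
    else if c == d - 3 then (d - 1, d - 4, 1, 1)
    else if c == d - 2 then (d - 1, d - 4, 2, 0)
    else (d - 2, d - 4, 1, 2)
  else if d <= c + e then (if d <= a + e then (a - 1, b, c, e) else (a, b, c, e - 1))
  else if b < e then (a - 1, b, c, e) else (a, b, c - 1, e).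

(* Removing the truncated subtractions keeps the case analysis of lia small. *)
Lemma d_shift : exists D,
  d = D + 5 /\ [/\ 2 * d - 3 = 2 * D + 7, d - 1 = D + 4, d - 2 = D + 3, d - 3 = D + 2
     & d - 4 = D + 1].
Proof. by exists (d - 5); split; [|split]; lia. Qed.

Lemma lower_exps_std a b c e :
  std4 d a b c e -> a + b + c + e = (2 * d - 3).+1 ->
  let: (a', b', c', e') := lower_exps a b c e in
  std4 d a' b' c' e' /\ a' + b' + c' + e' = 2 * d - 3.
Proof.
rewrite /lower_exps /std4; have [D [dE [-> -> -> -> ->]]] := d_shift.
rewrite dE => /and5P[ha hb hc he hab] hsum.
by repeat case: ifP => ?; lia.
Qed.

Lemma lower_exps_inj a b c e a' b' c' e' :
  std4 d a b c e -> a + b + c + e = (2 * d - 3).+1 ->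
  std4 d a' b' c' e' -> a' + b' + c' + e' = (2 * d - 3).+1 ->
  lower_exps a b c e = lower_exps a' b' c' e' -> [/\ a = a', b = b', c = c' & e = e'].
Proof.
rewrite /lower_exps /std4; have [D [dE [-> -> -> -> ->]]] := d_shift.
rewrite dE => /and5P[ha hb hc he hab] hsum /and5P[ha' hb' hc' he' hab'] hsum'.
repeat case: ifP => ?; move=> E;
  have := congr1 (fun t => t.1.1.1) E; have := congr1 (fun t => t.1.1.2) E;
  have := congr1 (fun t => t.1.2) E; have := congr1 (fun t => t.2) E;
  clear E => /= *; split; lia.
Qed.

Definition psi4 (m : 'X_{1..4}) : 'X_{1..4} :=
  let: (a, b, c, e) := lower_exps (expo m 0) (expo m 1) (expo m 2) (expo m 3) in
  mnm4 a b c e.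

Lemma expo_psi4 m :
  (expo (psi4 m) 0, expo (psi4 m) 1, expo (psi4 m) 2, expo (psi4 m) 3) =
  lower_exps (expo m 0) (expo m 1) (expo m 2) (expo m 3).
Proof. by rewrite /psi4; case: lower_exps => [[[a b] c] e]; rewrite !expo_mnm4. Qed.

Lemma psi4_std :
  {in std_deg (gens4 d) (2 * d - 3).+1, forall m, psi4 m \in std_deg (gens4 d) (2 * d - 3)}.
Proof.
move=> m; rewrite !std_deg_gens4 => /andP[std_m /eqP deg_m].
have := lower_exps_std std_m deg_m; rewrite -expo_psi4 => -[-> ->].
by rewrite eqxx.
Qed.

Lemma psi4_inj : {in std_deg (gens4 d) (2 * d - 3).+1 &, injective psi4}.
Proof.
move=> m1 m2; rewrite !std_deg_gens4 => /andP[std1 /eqP deg1] /andP[std2 /eqP deg2].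
move=> /(congr1 (fun m => (expo m 0, expo m 1, expo m 2, expo m 3))).
rewrite !expo_psi4 => /(lower_exps_inj std1 deg1 std2 deg2)[e0 e1 e2 e3].
exact: mnm4P.
Qed.

End LowerExponents.

Theorem lemma5p4 (k : fieldType) (hk : [pchar k] =i pred0) (d : nat)
    (hd : (5 <= d)%N) :
  fails_WLP_surj (I_lemma5p4 k d) (2 * d - 3)%N.
Proof.
rewrite /fails_WLP_surj I_lemma5p4E; split.
  exact: HF_ge_of_injective (psi4_std hd) (psi4_inj hd).
apply: (not_mult_sumX_surj (W := W4 k d) (m0 := mnm4 0 d.-1 0 d.-1)).
- by move=> m; apply: W4_supp; lia.
- exact: W4_harm.
- by rewrite W4_top ?oner_neq0 //; lia.
Qed.
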